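(* Let $G$ be a Tanner graph and $L\ge1$. Then $P^B_{BSC}(G)\subseteq P^B_{TAWGN(L)}(G)\subseteq P^B_{AWGN}(G)$.
   Context: A Tanner graph $G$ is a finite bipartite graph with variable nodes $v_1,\dots,v_n$ and check nodes; its code consists of all $x\in\{0,1\}^n$ with every check node having an even number of neighbours $v_i$ with $x_i=1$. A degree-$\ell$ lift replaces each node by $\ell$ copies and each edge by a perfect matching between copy-sets; a lift-realizable pseudocodeword $p\in\mathbb{Z}_{\ge0}^n$ is obtained from a codeword of the code of a finite lift by letting $p_i$ be the number of copies of $v_i$ assigned 1. The cost of $p$ with respect to a weight vector (vector of channel log-likelihood ratios) $w\in\mathbb{R}^n$ is $pw^T=\sum_ip_iw_i$. The possible weight vectors are $\{+1,-1\}^n$ for the binary symmetric channel (BSC), $[-L,L]^n$ for the truncated AWGN channel $TAWGN(L)$ (AWGN channel with log-likelihood ratios truncated to $[-L,L]$), and $\mathbb{R}^n$ for the AWGN channel. For each of these channels $X$, $P^B_X(G)$ is the set of lift-realizable pseudocodewords $p$ of $G$ for which there exists a weight vector $w$ possible for $X$ such that the cost $pw^T$ is the smallest among the costs of all lift-realizable pseudocodewords of $G$. *)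

From HB Require Import structures.
From mathcomp Require Import all_boot all_order all_algebra all_fingroup.
From mathcomp Require Import reals.
Set Implicit Arguments. Unset Strict Implicit. Unset Printing Implicit Defensive.
Import Order.TTheory GRing.Theory Num.Theory.
Local Open Scope ring_scope.

(* A Tanner graph with variable nodes 'I_n, check nodes 'I_m and
   edge relation E : E i j iff variable node i is adjacent to check node j. *)

(* A degree-l lift is given by a permutation pi i j of 'I_l for every pair
   (i,j) (only used when E i j): copy a of v_i is adjacent to copy b of c_j
   iff E i j and pi i j a = b.  x : 'I_n -> 'I_l -> bool assigns a bit to each
   copy of each variable node; it is a codeword of the lifted code iff every
   copy (j,b) of every check node has an even number of neighbours assigned 1. *)
Definition lift_codeword (n m l : nat) (E : 'I_n -> 'I_m -> bool)
    (pi : 'I_n -> 'I_m -> {perm 'I_l}) (x : 'I_n -> 'I_l -> bool) : Prop :=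
  forall (j : 'I_m) (b : 'I_l),
    ~~ odd #|[set ia : 'I_n * 'I_l |
               [&& E ia.1 j, pi ia.1 j ia.2 == b & x ia.1 ia.2]]|.

Definition lift_realizable (n m : nat) (E : 'I_n -> 'I_m -> bool)
    (p : 'I_n -> nat) : Prop :=
  exists l : nat, (0 < l)%N /\
  exists (pi : 'I_n -> 'I_m -> {perm 'I_l}) (x : 'I_n -> 'I_l -> bool),
    lift_codeword E pi x /\ forall i : 'I_n, p i = #|[set a | x i a]|.

Definition cost (R : realType) (n : nat) (p : 'I_n -> nat) (w : 'I_n -> R) : R :=
  \sum_(i < n) (p i)%:R * w i.

Definition bsc_weights (R : realType) (n : nat) (w : 'I_n -> R) : Prop :=
  forall i, w i = 1 \/ w i = -1.
Definition tawgn_weights (R : realType) (L : R) (n : nat) (w : 'I_n -> R) : Prop :=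
  forall i, -L <= w i <= L.
Definition awgn_weights (R : realType) (n : nat) (w : 'I_n -> R) : Prop := True.

(* P^B_X(G) for the channel whose possible weight vectors are W. *)
Definition PB (R : realType) (n m : nat) (E : 'I_n -> 'I_m -> bool)
    (W : ('I_n -> R) -> Prop) (p : 'I_n -> nat) : Prop :=
  lift_realizable E p /\
  exists w : 'I_n -> R, W w /\
    forall q : 'I_n -> nat, lift_realizable E q -> cost p w <= cost q w.

From HB Require Import structures.
From mathcomp Require Import all_boot all_order all_algebra all_fingroup.
From mathcomp Require Import reals.
From mathcomp Require Import lra.
Import Order.TTheory GRing.Theory Num.Theory.
Local Open Scope ring_scope.

(* The set of lift-realizable pseudocodewords does not depend on the channel,
   so P^B_X(G) can only grow when the set of possible weight vectors of X
   grows; and {+1,-1}^n is contained in [-L,L]^n once L >= 1. *)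

Lemma PB_sub (R : realType) (n m : nat) (E : 'I_n -> 'I_m -> bool)
    (W W' : ('I_n -> R) -> Prop) (p : 'I_n -> nat) :
  (forall w, W w -> W' w) -> PB E W p -> PB E W' p.
Proof.
move=> subWW' [realizable_p [w [Ww min_w]]].
by split=> //; exists w; split=> //; apply: subWW'.
Qed.

Lemma bsc_tawgn_weights (R : realType) (L : R) (n : nat) (w : 'I_n -> R) :
  1 <= L -> bsc_weights w -> tawgn_weights L w.
Proof.
move=> L_ge1 bsc_w i.
by have [-> | ->] := bsc_w i; apply/andP; split; lra.
Qed.

Theorem theorem10 (R : realType) (n m : nat) (E : 'I_n -> 'I_m -> bool) (L : R) :
  1 <= L ->
  (forall p, PB E (@bsc_weights R n) p -> PB E (tawgn_weights L (n:=n)) p) /\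
  (forall p, PB E (tawgn_weights L (n:=n)) p -> PB E (@awgn_weights R n) p).
Proof.
move=> L_ge1; split=> p; apply: PB_sub => w //.
exact: bsc_tawgn_weights.
Qed.
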